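(* Let $t\ge 1$ and $s\ge 3$ be integers with $s>(2^t+1)2^{t-1}$, and let $H_{t,s}=K_t\times C_s$. Then $H_{t,s}$ is $(t+1)$-regular, its edge connectivity is $t+1$, and $m(H_{t,s})\le 2^t$.
   Context: All graphs are finite and simple. $K_t$ is the complete graph on $t$ vertices and $C_s$ the cycle on $s$ vertices. The Cartesian product $H_1\times H_2$ of $H_1=(V_1,E_1)$ and $H_2=(V_2,E_2)$ has vertex set $V_1\times V_2$, with $(v_1,v_2)$ adjacent to $(u_1,u_2)$ iff either $v_1=u_1$ and $v_2u_2\in E_2$, or $v_2=u_2$ and $v_1u_1\in E_1$. The edge connectivity of a graph is the minimum number of edges whose removal disconnects it. For graphs $G_1=(V,E_1)$, $G_2=(V,E_2)$, their symmetric difference is $(V,E_1\oplus E_2)$. A connectivity code for $H=(V,E)$ is a collection of distinct spanning subgraphs $(V,E')$, $E'\subseteq E$, such that the symmetric difference of any two distinct members is a connected graph on $V$; $m(H)$ is the maximum cardinality of a connectivity code for $H$. *)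

(* Simple graphs on a finType V given by a symmetric,
   irreflexive adjacency relation; edges are 2-element vertex sets. *)
From mathcomp Require Import all_boot.
Set Implicit Arguments. Unset Strict Implicit. Unset Printing Implicit Defensive.

Section Graphs.
Variable V : finType.

Definition edges (adj : rel V) : {set {set V}} :=
  [set [set u.1; u.2] | u in [set u : V * V | adj u.1 u.2]].

Definition connectedE (F : {set {set V}}) : bool :=
  [forall x, forall y, connect (fun a b => [set a; b] \in F) x y].

Definition degree (adj : rel V) (x : V) : nat := #|[set y | adj x y]|.

Definition regular (adj : rel V) (k : nat) : Prop := forall x, degree adj x = k.

(* edge connectivity: minimum number of edges whose removal disconnects
   the graph (default #|E| if no removal disconnects it) *)
Definition edge_connectivity (adj : rel V) : nat :=
  \big[minn/#|edges adj|]_(F in powerset (edges adj) | ~~ connectedE (edges adj :\: F)) #|F|.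

(* a connectivity code: a set of spanning subgraphs (identified with their
   edge sets E' ⊆ E) whose pairwise symmetric differences are connected *)
Definition connectivity_code (adj : rel V) (C : {set {set {set V}}}) : bool :=
  [forall E1 in C, E1 \subset edges adj] &&
  [forall E1 in C, forall E2 in C,
     (E1 != E2) ==> connectedE ((E1 :\: E2) :|: (E2 :\: E1))].

Definition m_code (adj : rel V) : nat :=
  \max_(C : {set {set {set V}}} | connectivity_code adj C) #|C|.
End Graphs.

Definition K_adj (t : nat) : rel 'I_t := fun i j => i != j.
Arguments K_adj : clear implicits.

(* cycle C_s on 'I_s (meant for s >= 3) *)
Definition C_adj (s : nat) : rel 'I_s :=
  fun i j => (val j == (val i).+1 %% s) || (val i == (val j).+1 %% s).
Arguments C_adj : clear implicits.

Definition cart_adj (T1 T2 : finType) (r1 : rel T1) (r2 : rel T2) : rel (T1 * T2) :=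
  fun u v => ((u.1 == v.1) && r2 u.2 v.2) || ((u.2 == v.2) && r1 u.1 v.1).

Definition H_adj (t s : nat) : rel ('I_t * 'I_s) := cart_adj (K_adj t) (C_adj s).
Arguments H_adj : clear implicits.

From HB Require Import structures.
From mathcomp Require Import all_boot zify.
Set Implicit Arguments. Unset Strict Implicit. Unset Printing Implicit Defensive.

(* A vertex (i, k) of H lies in row i (a copy of the cycle C_s) and column k (a copy of K_t).
   - Regularity: (i, k) has the two cycle neighbours (i, k +- 1), distinct as s >= 3, and the
     t - 1 other vertices of its column.
   - Edge connectivity: deleting the t + 1 edges at a vertex isolates it. Conversely, after
     deleting at most t < s edges some column keeps all its edges; a row losing at most one
     cycle edge stays connected (a cycle minus an edge is a path) and meets that column; and
     every vertex of a row losing two cycle edges keeps a column edge to a row of the first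
     kind, since otherwise each of the t rows would account for a distinct deleted edge
     besides one fixed deleted edge.
   - Code bound: the cut behind column j consists of the t cycle edges between columns j and
     j + 1. In a code with 2^t + 1 members two members agree on each cut (pigeonhole on the 2^t
     possible traces). There are C(2^t + 1, 2) = (2^t + 1) 2^(t-1) < s pairs of members, so two
     cuts share such a pair {A, B}; then A (+) B avoids both cuts, so its edges never leave the
     arc of columns between them, contradicting the connectivity of A (+) B. *)

Section SpanningGraphs.
Variable V : finType.

Definition link (F : {set {set V}}) : rel V := fun a b => [set a; b] \in F.

Lemma link_sym (F : {set {set V}}) : symmetric (link F).
Proof. by move=> a b; rewrite /link setUC. Qed.

Lemma edges_mem (r : rel V) : symmetric r -> irreflexive r ->
  forall u v, ([set u; v] \in edges r) = r u v.
Proof.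
move=> r_sym r_irr u v; apply/imsetP/idP => [[[a b]]|ruv]; last by exists (u, v); rewrite ?inE.
rewrite inE /= => rab uv_ab.
have a_neq_b : a != b by apply: contraTneq rab => ->; rewrite r_irr.
have u_in : u \in [set a; b] by rewrite -uv_ab set21.
have v_in : v \in [set a; b] by rewrite -uv_ab set22.
case/set2P: u_in => u_eq; case/set2P: v_in => v_eq; subst u v => //.
- have : b \in [set a; a] by rewrite uv_ab set22.
  by rewrite setUid inE eq_sym (negbTE a_neq_b).
- by rewrite r_sym.
- have : a \in [set b; b] by rewrite uv_ab set21.
  by rewrite setUid inE (negbTE a_neq_b).
Qed.

Lemma connect_isolated (e : rel V) x y : (forall z, ~~ e x z) -> connect e x y -> y = x.
Proof.
move=> no_edge /connectP[[|z p] /= p_path ->] //.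
by rewrite (negbTE (no_edge z)) in p_path.
Qed.

Lemma connectivity_code_sub (adj : rel V) (C C' : {set {set {set V}}}) :
  C' \subset C -> connectivity_code adj C -> connectivity_code adj C'.
Proof.
move=> /subsetP sub /andP[/forall_inP C_sub /forall_inP C_conn]; apply/andP; split.
  by apply/forall_inP => E1 /sub; exact: C_sub.
by apply/forall_inP => E1 /sub /C_conn /forall_inP C1; apply/forall_inP => E2 /sub; exact: C1.
Qed.

(* minn is a commutative law, so a big minimum can be split at any of its terms. *)
HB.instance Definition _ := SemiGroup.isComLaw.Build nat minn minnA minnC.

Lemma edge_connectivity_eq (adj : rel V) k (F0 : {set {set V}}) :
  F0 \subset edges adj -> ~~ connectedE (edges adj :\: F0) -> #|F0| = k ->
  (forall F : {set {set V}}, F \subset edges adj -> ~~ connectedE (edges adj :\: F) -> k <= #|F|) ->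
  edge_connectivity adj = k.
Proof.
move=> F0_sub F0_cut F0_card min_cut; apply/eqP; rewrite eqn_leq; apply/andP; split.
  by rewrite /edge_connectivity (bigD1 F0) ?powersetE ?F0_sub //= -F0_card geq_minl.
apply: (big_ind (fun n => k <= n)) => [||F /andP[]]; last by rewrite powersetE; exact: min_cut.
  by rewrite -F0_card subset_leq_card.
by move=> m n km kn; rewrite leq_min km kn.
Qed.

End SpanningGraphs.

Lemma pairs_of_pow2 t : 0 < t -> 'C((2 ^ t).+1, 2) = (2 ^ t + 1) * 2 ^ (t - 1).
Proof.
move=> t_gt0; have pow_t : 2 ^ t = (2 ^ (t - 1)).*2 by rewrite -mul2n -expnS; congr (2 ^ _); lia.
by rewrite bin2 /= {2}pow_t -doubleMr doubleK addn1.
Qed.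

Lemma subset_of_card (T : finType) (A : {set T}) k :
  k <= #|A| -> exists2 B : {set T}, B \subset A & #|B| = k.
Proof.
move=> k_le; have : 0 < #|[set B : {set T} | B \subset A & #|B| == k]|.
  by rewrite cards_draws bin_gt0.
by case/card_gt0P => B; rewrite inE => /andP[sub /eqP]; exists B.
Qed.

Lemma modn_lt_double x s : x < s + s -> x %% s = if x < s then x else x - s.
Proof.
move=> x_lt; case: ltnP => [lt_xs|le_sx]; first by rewrite modn_small.
by rewrite -{1}(subnK le_sx) modnDr modn_small //; lia.
Qed.

Section Cycle.
Variable s : nat.

Lemma C_adjE (i j : 'I_s) : C_adj s i j = (j == ordS i) || (i == ordS j).
Proof. by []. Qed.

Lemma ordS_val (k : 'I_s) : ordS k = (if k.+1 < s then k.+1 else 0) :> nat.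
Proof. by rewrite /= modn_lt_double; case: ltnP => //; have := ltn_ord k; lia. Qed.

Lemma ordS_arc (j1 j2 : nat) (x : 'I_s) : j1 < j2 -> j2 < s ->
  x != j1 :> nat -> x != j2 :> nat -> (j1 < ordS x <= j2) = (j1 < x <= j2).
Proof. rewrite ordS_val; have := ltn_ord x; case: (ltnP x.+1 s); lia. Qed.

Lemma ordS_neq (k : 'I_s) : 1 < s -> ordS k != k.
Proof.
move=> s_gt1; rewrite -(inj_eq (@ord_inj s)) ordS_val; have := ltn_ord k.
by case: (ltnP k.+1 s); lia.
Qed.

Lemma ordS2_neq (k : 'I_s) : 2 < s -> ordS (ordS k) != k.
Proof.
move=> s_gt2; rewrite -(inj_eq (@ord_inj s)) !ordS_val; have := ltn_ord k.
by case: (ltnP k.+1 s); case: ifP; lia.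
Qed.

(* A cycle with one edge deleted stays connected: an equivalence relation on 'I_s that
   relates k to ordS k for every k except k0 relates all columns. *)
Lemma cycle_minus_edge_total (R : rel 'I_s) (k0 : 'I_s) :
  reflexive R -> symmetric R -> transitive R ->
  (forall k, k != k0 -> R k (ordS k)) -> forall a b, R a b.
Proof.
move=> R_refl R_sym R_trans R_step.
have k0_lt := ltn_ord k0; have s_gt0 : 0 < s by lia.
pose pos n : 'I_s := Ordinal (ltn_pmod n s_gt0).
have posS n : pos n.+1 = ordS (pos n).
  by apply: val_inj; rewrite /= -[(n %% s).+1]addn1 modnDml addn1.
have walk m : m < s -> R (pos k0.+1) (pos (k0.+1 + m)).
  elim: m => [|m IH] m_lt; first by rewrite addn0.
  apply: R_trans (IH (ltnW m_lt)) _; rewrite addnS posS; apply: R_step.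
  by rewrite -(inj_eq (@ord_inj s)) /= modn_lt_double; case: ltnP; lia.
suff from_start c : R (pos k0.+1) c by move=> a b; apply: R_trans (from_start b); rewrite R_sym.
have c_lt := ltn_ord c.
have [m m_lt ->] : exists2 m, m < s & c = pos (k0.+1 + m).
  exists (if k0 < c then c - k0.+1 else c + s - k0.+1); first by case: (ltnP k0 c); lia.
  by apply: val_inj; case: (ltnP k0 c) => /= k0_c; rewrite modn_lt_double; try case: ifP; lia.
exact: walk.
Qed.

End Cycle.

Section Product.
Variables t s : nat.
Hypothesis s_gt2 : 2 < s.

Local Notation H := (H_adj t s).
Local Notation E := (edges (H_adj t s)).

Lemma H_sym : symmetric H.
Proof.
move=> u v; rewrite /H_adj /cart_adj /K_adj /C_adj.
by rewrite (eq_sym u.1) (eq_sym u.2) (orbC (_ == (_ %% s))) (eq_sym v.1).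
Qed.

Lemma H_irr : irreflexive H.
Proof.
move=> u; rewrite /H_adj /cart_adj /K_adj C_adjE !eqxx /= orbF orbb eq_sym.
by rewrite (negbTE (ordS_neq _ (ltnW s_gt2))).
Qed.

Lemma H_edge u v : ([set u; v] \in E) = H u v.
Proof. exact: edges_mem H_sym H_irr u v. Qed.

Lemma eq_ordS (i j : 'I_s) : (i == ordS j) = (j == ord_pred i).
Proof. by rewrite -(inj_eq (@ord_pred_inj s)) ordSK eq_sym. Qed.

Lemma H_neighbours x : [set y | H x y] =
  (x.1, ordS x.2) |: ((x.1, ord_pred x.2) |: setX [set~ x.1] [set x.2]).
Proof.
apply/setP => -[a b]; rewrite !inE /H_adj /cart_adj /K_adj C_adjE !xpair_eqE -eq_ordS /=.
by rewrite (eq_sym x.2 b) (eq_sym x.1 a); case: (a == x.1); case: (b == x.2); rewrite /= ?orbF.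
Qed.

Lemma H_regular : regular H t.+1.
Proof.
move=> x; rewrite /degree H_neighbours !cardsU1 cardsX cardsC1 cards1 card_ord muln1.
rewrite !inE !xpair_eqE !eqxx /= orbF -eq_ordS eq_sym (negbTE (ordS2_neq _ s_gt2)).
by have := ltn_ord x.1; lia.
Qed.

Definition row_edge (i : 'I_t) (k : 'I_s) : {set 'I_t * 'I_s} := [set (i, k); (i, ordS k)].

Lemma row_edge_H i k : H (i, k) (i, ordS k).
Proof. by rewrite /H_adj /cart_adj eqxx C_adjE eqxx. Qed.

Lemma row_edge_inj i : injective (row_edge i).
Proof.
move=> k1 k2 same.
have : (i, k1) \in row_edge i k2 by rewrite -same set21.
case/set2P => [[] // | [k1_eq]].
have : (i, k2) \in row_edge i k1 by rewrite same set21.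
case/set2P => [[k2_eq] | [k2_eq]]; first by rewrite k2_eq.
by move: (ordS2_neq k2 s_gt2); rewrite -k1_eq -k2_eq eqxx.
Qed.

Definition star x : {set {set 'I_t * 'I_s}} := [set [set x; y] | y in [set y | H x y]].

Lemma star_sub x : star x \subset E.
Proof. by apply/subsetP => e /imsetP[y]; rewrite inE => xy ->; rewrite H_edge. Qed.

Lemma card_star x : #|star x| = t.+1.
Proof.
rewrite card_in_imset; first exact: H_regular.
move=> y1 y2; rewrite !inE => xy1 _ same.
have /set2P[y1_x|//] : y1 \in [set x; y2] by rewrite -same set22.
by rewrite y1_x H_irr in xy1.
Qed.

Lemma star_cut x : ~~ connectedE (E :\: star x).
Proof.
apply/negP => /forallP/(_ x)/forallP/(_ (x.1, ordS x.2)).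
have isolated z : ~~ link (E :\: star x) x z.
  rewrite /link in_setD negb_and negbK H_edge orbC -implybE; apply/implyP => xz.
  by apply/imsetP; exists z; rewrite ?inE.
move/(connect_isolated isolated)/(congr1 snd) => /= /eqP.
by rewrite (negbTE (ordS_neq _ (ltnW s_gt2))).
Qed.

Definition far_row (x : 'I_t * 'I_s) (e : {set 'I_t * 'I_s}) : 'I_t :=
  (odflt x [pick v in e | v != x]).1.

Lemma far_rowE x (e : {set 'I_t * 'I_s}) r :
  (exists2 v, v \in e & v != x) -> (forall v, v \in e -> v != x -> v.1 = r) -> far_row x e = r.
Proof.
move=> [v ve vx] in_row; rewrite /far_row.
case: pickP => [w /andP[we wx] | none] /=; first exact: in_row.
by move: (none v); rewrite ve vx.
Qed.

Lemma far_row_edge x r k : far_row x (row_edge r k) = r.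
Proof.
apply: far_rowE => [|v /set2P[] -> //].
have [rk_x|] := eqVneq (r, k) x; last by exists (r, k); rewrite ?set21.
exists (r, ordS k); rewrite ?set22 // -rk_x xpair_eqE eqxx /=; exact: ordS_neq (ltnW s_gt2).
Qed.

Lemma far_row_column i j r : r != i -> far_row (i, j) [set (i, j); (r, j)] = r.
Proof.
move=> r_ne; apply: far_rowE => [|v /set2P[] -> //]; last by rewrite eqxx.
by exists (r, j); rewrite ?set22 // xpair_eqE (negbTE r_ne).
Qed.

Section FewDeletedEdges.
Variable F : {set {set 'I_t * 'I_s}}.
Hypothesis F_small : #|F| <= t.
Hypothesis t_lt_s : t < s.

Local Notation reach := (connect (link (E :\: F))).

Lemma reach_sym : connect_sym (link (E :\: F)).
Proof. exact/sym_connect_sym/link_sym. Qed.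

Lemma reach_edge a b : H a b -> [set a; b] \notin F -> reach a b.
Proof. by move=> ab abF; apply: connect1; rewrite /link inE abF H_edge. Qed.

(* Some column keeps all its clique edges, as there are more columns than deleted edges. *)
Lemma clean_column : exists j0, forall a b : 'I_t, [set (a, j0); (b, j0)] \notin F.
Proof.
have [/existsP[j0 /forallP clean]|/existsPn dirty] :=
  boolP [exists j, [forall ab : 'I_t * 'I_t, [set (ab.1, j); (ab.2, j)] \notin F]].
  by exists j0 => a b; exact: (clean (a, b)).
have /fin_all_exists[ab abF] j : exists ab : 'I_t * 'I_t, [set (ab.1, j); (ab.2, j)] \in F.
  by have /forallPn[ab] := dirty j; rewrite negbK; exists ab.
pose deleted j := [set ((ab j).1, j); ((ab j).2, j)].
have deleted_inj : injective deleted.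
  move=> j1 j2 same; have : ((ab j1).1, j1) \in deleted j2 by rewrite -same set21.
  by case/set2P => -[].
have : #|deleted @: [set: 'I_s]| <= #|F|.
  by apply/subset_leq_card/subsetP => _ /imsetP[j _ ->]; exact: abF.
by rewrite card_imset // cardsT card_ord; lia.
Qed.

Definition broken (i : 'I_t) : bool :=
  [exists k1, exists k2, [&& k1 != k2, row_edge i k1 \in F & row_edge i k2 \in F]].

(* An unbroken row lost at most one edge of its cycle, so it stays connected. *)
Lemma unbroken_row_connected i : ~~ broken i -> forall a b, reach (i, a) (i, b).
Proof.
move=> i_ok a b.
have [k0 only_k0] : exists k0, forall k, row_edge i k \in F -> k = k0.
  case: (pickP (fun k => row_edge i k \in F)) => [k0 k0F | none]; last first.
    by exists a => k; rewrite none.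
  exists k0 => k kF; apply/eqP; apply: contraNT i_ok => k_ne.
  by apply/existsP; exists k; apply/existsP; exists k0; rewrite k_ne kF k0F.
apply: (@cycle_minus_edge_total s (fun a b => reach (i, a) (i, b)) k0) => //.
- by move=> x y; rewrite reach_sym.
- by move=> y x z; exact: connect_trans.
- by move=> k k_ne; apply: reach_edge (row_edge_H i k) _; apply: contra k_ne => /only_k0 ->.
Qed.

(* Otherwise every
   row r is the far row (seen from (i, j)) of a deleted edge other than a fixed deleted cycle
   edge of row i: a deleted cycle edge of r if r is broken, the edge (i, j)(r, j) if not. *)
Lemma broken_row_escape i j :
  broken i -> exists2 i', ~~ broken i' & [set (i, j); (i', j)] \notin F.
Proof.
move=> i_broken.
have [/existsP[i' /andP[i'_ok kept]] | /existsPn all_cut] :=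
  boolP [exists i', ~~ broken i' && ([set (i, j); (i', j)] \notin F)].
  by exists i'.
have [k2 k2F] : exists k2, row_edge i k2 \in F.
  by case/existsP: i_broken => k1 /existsP[k2] /and3P[_ _ k2F]; exists k2.
pose e2 := row_edge i k2.
have rows_covered : [set: 'I_t] \subset far_row (i, j) @: (F :\ e2).
  apply/subsetP => r _; apply/imsetP; have [r_broken | r_ok] := boolP (broken r).
    have [l [lF l_ne]] : exists l, row_edge r l \in F /\ row_edge r l != e2.
      case/existsP: r_broken => l1 /existsP[l2] /and3P[l12 l1F l2F].
      have [e1|] := eqVneq (row_edge r l1) e2; last by exists l1.
      by exists l2; rewrite -e1 (inj_eq (@row_edge_inj r)) eq_sym.
    by exists (row_edge r l); rewrite ?far_row_edge // !inE l_ne lF.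
  have rF := all_cut r; rewrite r_ok negbK /= in rF.
  have r_ne : r != i by apply: contraNneq r_ok => ->.
  exists [set (i, j); (r, j)]; last by rewrite far_row_column.
  rewrite !inE rF andbT; apply: contra r_ne => /eqP r_e2.
  have : (r, j) \in e2 by rewrite -r_e2 set22.
  by case/set2P => -[->].
exfalso; have := leq_trans (subset_leq_card rows_covered) (leq_imset_card _ _).
have := F_small; rewrite cardsT card_ord (cardsD1 e2 F) k2F add1n.
by move=> /leq_trans/[apply]; rewrite ltnn.
Qed.

(* Deleting at most t < s edges leaves H connected: everything reaches the clean column. *)
Lemma few_deleted_edges_connected : connectedE (E :\: F).
Proof.
have [j0 clean] := clean_column.
have to_column x : exists a, reach x (a, j0).
  case: x => i j; have [i_broken | i_ok] := boolP (broken i); last first.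
    by exists i; exact: unbroken_row_connected.
  have [i' i'_ok kept] := broken_row_escape j i_broken.
  exists i'; apply: connect_trans (unbroken_row_connected i'_ok j j0).
  apply: reach_edge kept; rewrite /H_adj /cart_adj /K_adj eqxx /=.
  by apply/orP; right; apply: contraNneq i'_ok => <-.
apply/forallP => x; apply/forallP => y.
have [a xa] := to_column x; have [b yb] := to_column y.
apply: connect_trans xa _; rewrite reach_sym; apply: connect_trans yb _.
have [-> //|ba] := eqVneq b a.
by apply: reach_edge (clean _ _); rewrite /H_adj /cart_adj /K_adj eqxx ba orbT.
Qed.

End FewDeletedEdges.

(* The star of a vertex is a minimum disconnecting set of edges. *)
Lemma H_edge_connectivity : 0 < t -> t < s -> edge_connectivity H = t.+1.
Proof.
move=> t_gt0 t_lt_s; have s_gt0 : 0 < s by lia.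
pose x0 : 'I_t * 'I_s := (Ordinal t_gt0, Ordinal s_gt0).
apply: (edge_connectivity_eq (star_sub x0) (star_cut x0) (card_star x0)) => F _ F_cut.
by rewrite ltnNge; apply: contra F_cut => F_small; exact: few_deleted_edges_connected.
Qed.

Definition cut (j : 'I_s) : {set {set 'I_t * 'I_s}} := [set row_edge i j | i : 'I_t].

(* A spanning subgraph of H missing the cuts behind columns j1 < j2 is disconnected: its edges
   never leave the arc of columns (j1, j2]. *)
Lemma two_cuts_disconnect (D : {set {set 'I_t * 'I_s}}) (j1 j2 : 'I_s) :
  0 < t -> j1 < j2 -> D \subset E ->
  (forall i, row_edge i j1 \notin D) -> (forall i, row_edge i j2 \notin D) -> ~~ connectedE D.
Proof.
move=> t_gt0 j12 DE avoid1 avoid2.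
have step i k : row_edge i k \in D -> (j1 < ordS k <= j2) = (j1 < k <= j2).
  move=> ikD; apply: ordS_arc => //.
  - by apply: contraNneq (avoid1 i) => /ord_inj <-.
  - by apply: contraNneq (avoid2 i) => /ord_inj <-.
have arc_closed : closed (link D) [pred v : 'I_t * 'I_s | j1 < v.2 <= j2].
  apply: intro_closed; first exact/sym_connect_sym/link_sym.
  move=> [a1 a2] [b1 b2] abD; have := subsetP DE _ abD.
  rewrite H_edge /H_adj /cart_adj /= C_adjE !inE /=.
  case/orP => [/andP[/eqP a1_b1 /orP[/eqP b2_eq | /eqP a2_eq]] | /andP[/eqP -> _] //]; subst.
    by rewrite (step _ _ abD).
  by rewrite link_sym in abD; rewrite (step _ _ abD).
pose i0 : 'I_t := Ordinal t_gt0.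
apply/negP => /forallP/(_ (i0, j2))/forallP/(_ (i0, j1))/(closed_connect arc_closed).
by rewrite !inE /= ltnn j12 leqnn.
Qed.

Lemma sym_diff_avoids_cut (A B : {set {set 'I_t * 'I_s}}) j :
  A :&: cut j = B :&: cut j -> forall i, row_edge i j \notin (A :\: B) :|: (B :\: A).
Proof.
move=> same i; have cut_ij : row_edge i j \in cut j by apply: imset_f.
move/setP/(_ (row_edge i j)): same; rewrite !inE cut_ij !andbT => ->.
by case: (_ \in B).
Qed.

Lemma agreeing_pair (C : {set {set {set 'I_t * 'I_s}}}) j : 2 ^ t < #|C| ->
  exists X : {set {set {set 'I_t * 'I_s}}},
    [/\ X \subset C, #|X| = 2 & {in X &, forall A B, A :&: cut j = B :&: cut j}].
Proof.
move=> C_big; pose trace A := A :&: cut j.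
have [/exists_inP[A AC /exists_inP[B BC /andP[AB /eqP same]]] | no_pair] :=
  boolP [exists A in C, exists B in C, (A != B) && (trace A == trace B)].
  exists [set A; B]; split; first by apply/subsetP => X /set2P[] ->.
    by rewrite cards2 AB.
  by move=> X Y /set2P[] -> /set2P[] ->.
have trace_inj : {in C &, injective trace}.
  move=> A B AC BC same; apply/eqP/negPn/negP => AB; case/negP: no_pair.
  by apply/exists_inP; exists A => //; apply/exists_inP; exists B; rewrite ?BC ?AB ?same ?eqxx.
have : #|trace @: C| <= #|powerset (cut j)|.
  by apply/subset_leq_card/subsetP => _ /imsetP[A _ ->]; rewrite powersetE subsetIr.
rewrite card_in_imset // card_powerset => C_small.
have cut_small : #|cut j| <= t by apply: leq_trans (leq_imset_card _ _) _; rewrite ?cardsT card_ord.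
by have := leq_trans C_small (leq_pexp2l (isT : 0 < 2) cut_small); rewrite leqNgt C_big.
Qed.

(* A connectivity code of H with 2^t + 1 members assigns to each of the s columns a pair of
   members agreeing on its cut. There are fewer pairs than columns, so two columns j1 < j2 share
   a pair {A, B}, and A (+) B, which is connected, avoids both cuts: a contradiction. *)
Lemma no_code_of_size (C : {set {set {set 'I_t * 'I_s}}}) :
  0 < t -> 'C((2 ^ t).+1, 2) < s -> connectivity_code H C -> #|C| = (2 ^ t).+1 -> False.
Proof.
move=> t_gt0 few_pairs /andP[/forall_inP C_sub /forall_inP C_conn] C_card.
have /fin_all_exists[pair pairP] j := agreeing_pair j (eq_leq (esym C_card)).
have shared (j1 j2 : 'I_s) : j1 < j2 -> pair j1 = pair j2 -> False.
  move=> j12 same; have [XC /eqP/cards2P[A [B [AB X_AB]]] agree1] := pairP j1.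
  have [_ _ agree2] := pairP j2; rewrite -same X_AB in agree2; rewrite X_AB in agree1.
  have [AC BC] : A \in C /\ B \in C by split; apply: (subsetP XC); rewrite X_AB ?set21 ?set22.
  have := C_conn A AC => /forall_inP/(_ B BC); rewrite AB; apply/negP.
  apply: two_cuts_disconnect t_gt0 j12 _ _ _.
  - apply/subsetP => e; rewrite !inE => /orP[] /andP[_].
      exact: (subsetP (C_sub A AC)).
    exact: (subsetP (C_sub B BC)).
  - by apply: sym_diff_avoids_cut; apply: agree1; rewrite ?set21 ?set22.
  - by apply: sym_diff_avoids_cut; apply: agree2; rewrite ?set21 ?set22.
have pair_inj : injective pair.
  move=> j1 j2 same; case: (ltngtP j1 j2) => [lt | gt | /val_inj //].
    by case: (shared _ _ lt same).
  by case: (shared _ _ gt (esym same)).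
have : #|pair @: [set: 'I_s]| <= #|[set X : {set _} | X \subset C & #|X| == 2]|.
  apply/subset_leq_card/subsetP => _ /imsetP[j _ ->].
  by have [XC X2 _] := pairP j; rewrite inE XC X2 eqxx.
by rewrite card_imset // cardsT card_ord cards_draws C_card leqNgt few_pairs.
Qed.

(* Every connectivity code of H has at most 2^t members, as a larger one would contain a
   connectivity code of size 2^t + 1. *)
Lemma H_code_bound : 0 < t -> 'C((2 ^ t).+1, 2) < s -> m_code H <= 2 ^ t.
Proof.
move=> t_gt0 few_pairs; apply/bigmax_leqP => C C_code; rewrite leqNgt; apply/negP => C_big.
have [C' C'_sub C'_card] := subset_of_card C_big.
exact: no_code_of_size t_gt0 few_pairs (connectivity_code_sub C'_sub C_code) C'_card.
Qed.

End Product.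

Theorem proposition3p2 (t s : nat) :
  1 <= t -> 3 <= s -> (2 ^ t + 1) * 2 ^ (t - 1) < s ->
  [/\ regular (H_adj t s) t.+1,
      edge_connectivity (H_adj t s) = t.+1
    & m_code (H_adj t s) <= 2 ^ t].
Proof.
move=> t_gt0 s_gt2 s_big.
have few_pairs : 'C((2 ^ t).+1, 2) < s by rewrite pairs_of_pow2.
have t_lt_s : t < s.
  have := ltn_expl t (isT : 1 < 2).
  have : 2 ^ t + 1 <= (2 ^ t + 1) * 2 ^ (t - 1) by rewrite leq_pmulr // expn_gt0.
  lia.
split; [exact: H_regular | exact: H_edge_connectivity | exact: H_code_bound].
Qed.
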